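(* Let $F$ be a commutative field, $1\le h\le n-1$, and let $K$ be a linear complex of $h$-subspaces in $\mathrm{PG}(n,F)$. If $U_1\neq U_2$ are singular $(h-1)$-subspaces of $K$ which are collinear in $\Gamma(n,h-1,F)$ (i.e. $\dim(U_1\cap U_2)=h-2$), then every element of the pencil of $(h-1)$-subspaces determined by $U_1$ and $U_2$ (all $(h-1)$-subspaces containing $U_1\cap U_2$ and contained in $U_1\vee U_2$) is a singular $(h-1)$-subspace of $K$.
   Context: A $d$-subspace is a projective subspace of dimension $d$; $\vee$ denotes join. A linear complex of $h$-subspaces is the set of $h$-subspaces whose Plücker coordinates (image of the span of $v_0,\dots,v_h$ as $F(v_0\wedge\dots\wedge v_h)$ in $\mathbb P(\bigwedge^{h+1}F^{n+1})$) lie in a fixed hyperplane of $\mathbb P(\bigwedge^{h+1}F^{n+1})$. An $(h-1)$-subspace $U$ is singular for $K$ if every $h$-subspace containing $U$ belongs to $K$. $\Gamma(n,h-1,F)$ is the Grassmannian whose points are the $(h-1)$-subspaces and whose lines are pencils of $(h-1)$-subspaces. *)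

From HB Require Import structures.
From mathcomp Require Import all_boot all_order all_algebra.
Set Implicit Arguments. Unset Strict Implicit. Unset Printing Implicit Defensive.
Import GRing.Theory.
Local Open Scope ring_scope.

(* PG(n,F) = projective space of F^(n+1); row vectors 'rV[F]_(n.+1).
   A projective d-subspace is a vector subspace of dimension d+1. *)

Section Plucker.
Variables (F : fieldType) (n h : nat).

Definition minor (M : 'M[F]_(h.+1, n.+1)) (S : {set 'I_n.+1}) : F :=
  \det (\matrix_(i < h.+1, j < h.+1) M i (nth ord0 (enum S) j)).

(* A hyperplane of P(/\^{h+1} F^{n+1}) given in Plücker coordinates by the
   coefficient vector c (indexed by the (h+1)-subsets of columns); the
   Plücker vector of the rows of M lies on it iff the sum vanishes. *)
Definition plucker_form (c : {ffun {set 'I_n.+1} -> F}) (M : 'M[F]_(h.+1, n.+1)) : F :=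
  \sum_(S : {set 'I_n.+1} | #|S| == h.+1) c S * minor M S.

Definition nondeg_coeffs (c : {ffun {set 'I_n.+1} -> F}) : Prop :=
  exists S : {set 'I_n.+1}, #|S| = h.+1 /\ c S != 0.

Definition in_complex (c : {ffun {set 'I_n.+1} -> F})
    (W : {vspace 'rV[F]_n.+1}) : Prop :=
  \dim W = h.+1 /\
  exists vs : (h.+1).-tuple 'rV[F]_n.+1,
    [/\ free vs, (<<vs>>%VS = W) &
        plucker_form c (\matrix_(i < h.+1) tnth vs i) = 0].

Definition singular (c : {ffun {set 'I_n.+1} -> F}) (U : {vspace 'rV[F]_n.+1}) : Prop :=
  \dim U = h /\
  forall W : {vspace 'rV[F]_n.+1}, \dim W = h.+1 -> (U <= W)%VS -> in_complex c W.

End Plucker.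

(* Write V := U1 ∩ U2 and let W be an h-subspace through a member U of the
   pencil. Choose u ∈ U \ V and w ∈ W \ U, so that w, a basis of V, and u
   form a basis of W. Split u = x1 + x2 with xi ∈ Ui: the Plücker form is
   linear in the row holding u, and replacing u by xi leaves a family inside
   Ui + <w>, which lies in an h-subspace through the singular Ui, so both
   terms vanish. *)
From HB Require Import structures.
From mathcomp Require Import all_boot all_order all_algebra.
Set Implicit Arguments. Unset Strict Implicit. Unset Printing Implicit Defensive.
Import GRing.Theory.
Local Open Scope ring_scope.

Section VspaceFacts.
Variables (K : fieldType) (vT : vectType K).
Implicit Types (U V W : {vspace vT}) (w : vT).

Lemma exists_mem_notin U V : (\dim V < \dim U)%N -> exists2 u, u \in U & u \notin V.
Proof.
move=> ltVU; apply/subvPn; apply: contraTN ltVU => /dimvS.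
by rewrite leqNgt.
Qed.

Lemma dim_addv_line U w : w \notin U -> \dim (U + <[w]>)%VS = (\dim U).+1.
Proof.
move=> wU; have w0 : w != 0 by apply: contraNneq wU => ->; rewrite mem0v.
rewrite dimv_disjoint_sum ?dim_vline ?w0 ?addn1 //.
apply/eqP; rewrite -subv0; apply/subvP => x; rewrite memv_cap memv0.
case/andP=> xU /vlineP[k xk]; subst x; have [-> | k0] := eqVneq k 0; first by rewrite scale0r.
by move: (memvZ k^-1 xU); rewrite scalerA mulVf // scale1r (negbTE wU).
Qed.

Lemma addv_line_eq U W w : (U <= W)%VS -> w \in W -> w \notin U ->
  \dim W = (\dim U).+1 -> (U + <[w]>)%VS = W.
Proof.
move=> UW wW wU dW; apply/eqP; rewrite eqEdim subv_add UW -memvE wW.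
by rewrite dim_addv_line // dW leqnn.
Qed.

End VspaceFacts.

Section PluckerForm.
Variables (F : fieldType) (n h : nat) (c : {ffun {set 'I_n.+1} -> F}).
Implicit Types (M : 'M[F]_(h.+1, n.+1)) (U W : {vspace 'rV[F]_n.+1}).

Lemma plucker_form_mulmx (P : 'M[F]_h.+1) M :
  plucker_form c (P *m M) = \det P * plucker_form c M.
Proof.
rewrite /plucker_form mulr_sumr; apply: eq_bigr => S _.
rewrite mulrCA; congr (_ * _); rewrite /minor -det_mulmx; congr (\det _).
by apply/matrixP => i j; rewrite !mxE; apply: eq_bigr => k _; rewrite mxE.
Qed.

Lemma plucker_form_rowD M (k : 'I_h.+1) x y : row k M = x + y ->
  plucker_form c M =
    plucker_form c (\matrix_i (if i == k then x else row i M)) +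
    plucker_form c (\matrix_i (if i == k then y else row i M)).
Proof.
move=> rowM; rewrite /plucker_form -big_split; apply: eq_bigr => S _ /=.
rewrite -mulrDr /minor; congr (_ * _).
rewrite -[in RHS](mul1r (\det _)) -[X in _ + X]mul1r.
apply: (determinant_multilinear (i0 := k)).
- apply/rowP => j; move/rowP/(_ (nth ord0 (enum S) j)): rowM.
  by rewrite !mxE !eqxx !mul1r.
- by apply/matrixP => i j; rewrite !mxE eq_sym (negbTE (neq_lift _ _)) mxE.
- by apply/matrixP => i j; rewrite !mxE eq_sym (negbTE (neq_lift _ _)) mxE.
Qed.

Lemma plucker_form_in_complex W M :
  in_complex h c W -> (forall i, row i M \in W) -> plucker_form c M = 0.
Proof.
case=> _ [vs [_ <- pf_vs]] rowsM.
have -> : M = \matrix_(i, j) coord vs j (row i M) *m \matrix_i tnth vs i.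
  apply/row_matrixP => i; rewrite row_mul mulmx_sum_row {1}(coord_span (rowsM i)).
  by apply: eq_bigr => k _; rewrite !mxE rowK (tnth_nth 0).
by rewrite plucker_form_mulmx pf_vs mulr0.
Qed.

(* If w ∈ U, the h-subspace through U is U + <y> for an arbitrary y ∉ U. *)
Lemma plucker_form_singular U w M : (h < n.+1)%N -> singular h c U ->
  (forall i, row i M \in (U + <[w]>)%VS) -> plucker_form c M = 0.
Proof.
move=> hn [dU sU] rowsM.
have [y yU sub] : exists2 y, y \notin U & (U + <[w]> <= U + <[y]>)%VS.
  have [wU | wU] := boolP (w \in U); last by exists w.
  have [y _ yU] : exists2 y, y \in fullv & y \notin U.
    by apply: exists_mem_notin; rewrite dimvf /dim /= mul1n dU.
  by exists y; rewrite // subv_add addvSl (subv_trans _ (addvSl U <[y]>)) -?memvE.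
apply: (plucker_form_in_complex (sU _ _ (addvSl U <[y]>))).
  by rewrite dim_addv_line ?dU.
by move=> i; apply: subvP sub _ (rowsM i).
Qed.

Lemma plucker_form_pencil U1 U2 w M (k : 'I_h.+1) :
  (h < n.+1)%N -> singular h c U1 -> singular h c U2 ->
  row k M \in (U1 + U2)%VS ->
  (forall i, i != k -> row i M \in (U1 :&: U2 + <[w]>)%VS) ->
  plucker_form c M = 0.
Proof.
move=> hn sU1 sU2 /memv_addP[x1 x1U1 [x2 x2U2 rowM]] rowsM.
rewrite (plucker_form_rowD rowM).
have rows_in Ui xi : (U1 :&: U2 <= Ui)%VS -> xi \in Ui ->
    forall i, row i (\matrix_i (if i == k then xi else row i M)) \in (Ui + <[w]>)%VS.
  move=> VUi xiUi i; rewrite rowK; case: eqP => [_ | /eqP ik].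
    exact: subvP (addvSl _ _) _ xiUi.
  by apply: subvP (rowsM i ik); apply: addvS.
rewrite (plucker_form_singular hn sU1 (rows_in _ _ (capvSl _ _) x1U1)).
by rewrite (plucker_form_singular hn sU2 (rows_in _ _ (capvSr _ _) x2U2)) addr0.
Qed.

Lemma in_complex_pencil_basis U1 U2 w (s : seq 'rV[F]_n.+1) u :
  (h < n.+1)%N -> singular h c U1 -> singular h c U2 ->
  size s = h -> \dim <<rcons s u>> = h.+1 ->
  u \in (U1 + U2)%VS -> {subset s <= (U1 :&: U2 + <[w]>)%VS} ->
  in_complex h c <<rcons s u>>.
Proof.
move=> hn sU1 sU2 size_s dim_su uU12 sV.
have size_su : size (rcons s u) == h.+1 by rewrite size_rcons size_s.
split=> //; exists (Tuple size_su); split=> //.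
  by rewrite /free dim_su size_rcons size_s.
apply: (plucker_form_pencil (w := w) (k := ord_max) hn sU1 sU2) => [|i].
  by rewrite rowK (tnth_nth 0) nth_rcons size_s ltnn eqxx.
rewrite rowK (tnth_nth 0) nth_rcons size_s -val_eqE /= => ik.
have ltih : (i < h)%N by rewrite ltn_neqAle ik -ltnS ltn_ord.
by rewrite ltih; apply/sV/mem_nth; rewrite size_s.
Qed.

End PluckerForm.

Theorem corollary5p5 (F : fieldType) (n h : nat)
    (c : {ffun {set 'I_n.+1} -> F}) (U1 U2 : {vspace 'rV[F]_n.+1}) :
  (1 <= h)%N -> (h <= n - 1)%N ->
  nondeg_coeffs h c ->
  singular h c U1 -> singular h c U2 -> U1 != U2 ->
  \dim (U1 :&: U2)%VS = h.-1 ->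
  forall U : {vspace 'rV[F]_n.+1},
    \dim U = h -> (U1 :&: U2 <= U)%VS -> (U <= U1 + U2)%VS ->
    singular h c U.
Proof.
move=> h_gt0 h_le _ sU1 sU2 _ dV U dU VU UU12; split=> // W dW UW.
have hn : (h < n.+1)%N by apply: leq_ltn_trans h_le _; rewrite ltnS leq_subr.
have h_eq : h = (h.-1).+1 by rewrite prednK.
set V := (U1 :&: U2)%VS in dV VU.
have [u uU uV] : exists2 u, u \in U & u \notin V.
  by apply: exists_mem_notin; rewrite dV dU {2}h_eq.
have [w wW wU] : exists2 w, w \in W & w \notin U.
  by apply: exists_mem_notin; rewrite dW dU.
have eU : (V + <[u]>)%VS = U by apply: addv_line_eq; rewrite // dV -h_eq.
have eW : (U + <[w]>)%VS = W by apply: addv_line_eq; rewrite // dU.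
have span_W : <<rcons (w :: vbasis V) u>>%VS = W.
  rewrite -cats1 span_cat span_cons span_seq1 (span_basis (vbasisP V)).
  by rewrite -addvA addvC eU.
rewrite -span_W; apply: (in_complex_pencil_basis (w := w) hn sU1 sU2).
- by rewrite /= size_tuple dV -h_eq.
- by rewrite span_W.
- exact: subvP UU12 _ uU.
move=> x; rewrite inE => /predU1P[-> | /vbasis_mem xV].
  exact: subvP (addvSr _ _) _ (memv_line w).
exact: subvP (addvSl _ _) _ xV.
Qed.
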